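(* Let $(X,d)$ be a metric space and let $T:X\to X$ be a CJMP-contraction. Let $\varepsilon>0$ and let $\delta=\delta(\varepsilon)>0$ be such that for all $x,y\in X$, $\varepsilon<d(x,y)<\varepsilon+\delta$ implies $d(Tx,Ty)\le\varepsilon$. If $x,y,z\in X$ satisfy $d(x,y)<\delta$ and $d(y,z)\le\varepsilon$, then $d(Tx,Tz)\le\varepsilon$.
   Context: A map $T:X\to X$ on a metric space $(X,d)$ is contractive if $d(Tx,Ty)<d(x,y)$ for all $x,y\in X$ with $x\neq y$. $T$ is a CJMP-contraction if (a) $T$ is contractive, and (b) for every $\varepsilon>0$ there exists $\delta=\delta(\varepsilon)>0$ such that for all $x,y\in X$, $\varepsilon<d(x,y)<\varepsilon+\delta$ implies $d(Tx,Ty)\le\varepsilon$. *)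

From Stdlib Require Import Reals.
Open Scope R_scope.

Definition is_metric {X : Type} (d : X -> X -> R) : Prop :=
  (forall x y, 0 <= d x y) /\
  (forall x y, d x y = 0 <-> x = y) /\
  (forall x y, d x y = d y x) /\
  (forall x y z, d x z <= d x y + d y z).

Definition contractive {X : Type} (d : X -> X -> R) (T : X -> X) : Prop :=
  forall x y, x <> y -> d (T x) (T y) < d x y.

Definition cjmp_delta_prop {X : Type} (d : X -> X -> R) (T : X -> X)
  (eps delta : R) : Prop :=
  forall x y, eps < d x y -> d x y < eps + delta -> d (T x) (T y) <= eps.

Definition CJMP_contraction {X : Type} (d : X -> X -> R) (T : X -> X) : Prop :=
  contractive d T /\
  (forall eps, 0 < eps -> exists delta, 0 < delta /\ cjmp_delta_prop d T eps delta).

From Stdlib Require Import Reals Lra Classical.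
Open Scope R_scope.

(* A contractive map is nonexpansive, so points at distance at most eps stay
   eps-close under T; the delta-condition covers distances in (eps, eps + delta).
   Together they handle every d x z < eps + delta, and the triangle inequality
   gives d x z <= d x y + d y z < delta + eps. *)

Lemma metric_dist_self {X : Type} (d : X -> X -> R) :
  is_metric d -> forall x, d x x = 0.
Proof.
  intros [_ [Hzero _]] x.
  now apply Hzero.
Qed.

Lemma contractive_nonexpansive {X : Type} (d : X -> X -> R) (T : X -> X) :
  (forall x, d x x = 0) -> contractive d T ->
  forall x y, d (T x) (T y) <= d x y.
Proof.
  intros Hself Hc x y.
  destruct (classic (x = y)) as [-> | Hxy].
  - rewrite !Hself; lra.
  - apply Rlt_le, Hc, Hxy.
Qed.

Lemma cjmp_delta_prop_lt {X : Type} (d : X -> X -> R) (T : X -> X)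
  (eps delta : R) :
  (forall x y, d (T x) (T y) <= d x y) -> cjmp_delta_prop d T eps delta ->
  forall x y, d x y < eps + delta -> d (T x) (T y) <= eps.
Proof.
  intros Hne Hed x y Hlt.
  destruct (Rle_or_lt (d x y) eps) as [Hle | Hgt].
  - eapply Rle_trans; [apply Hne | exact Hle].
  - now apply Hed.
Qed.

Theorem mainTheorem1 (X : Type) (d : X -> X -> R) (T : X -> X)
  (Hd : is_metric d) (HT : CJMP_contraction d T)
  (eps delta : R) (Heps : 0 < eps) (Hdelta : 0 < delta)
  (Hed : cjmp_delta_prop d T eps delta)
  (x y z : X) (Hxy : d x y < delta) (Hyz : d y z <= eps) :
  d (T x) (T z) <= eps.
Proof.
  assert (Hne : forall u v, d (T u) (T v) <= d u v).
  { apply contractive_nonexpansive; [apply metric_dist_self, Hd | apply HT]. }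
  apply (cjmp_delta_prop_lt d T eps delta Hne Hed).
  destruct Hd as [_ [_ [_ Htriangle]]].
  pose proof (Htriangle x y z).
  lra.
Qed.
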